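(* Let $(\mathcal H,\mathfrak A_0)$ be a Hilbert quasi *-algebra admitting a norm-continuous module function $\mu$ with $\mu(\mathfrak A_0)\subseteq\mathfrak A_0^+$. Then every w-positive element is the limit of a sequence of elements of $\mathfrak A_0^+$; i.e. $\mathcal H^+=\mathcal H^+_w$.
   Context: A Hilbert algebra is a *-algebra $\mathfrak A_0$ with an inner product $\langle\cdot,\cdot\rangle$ such that (i) for each $x$, $y\mapsto xy$ is continuous for the inner product norm; (ii) $\langle xy,z\rangle=\langle y,x^*z\rangle$ for all $x,y,z$; (iii) $\langle x,y\rangle=\langle y^*,x^*\rangle$ for all $x,y$; (iv) the linear span of $\{xy:x,y\in\mathfrak A_0\}$ is dense in $\mathfrak A_0$. Let $\mathcal H$ be the Hilbert space completion of $\mathfrak A_0$; the involution extends isometrically to $\mathcal H$, and the products $\xi x$, $x\xi$ for $\xi\in\mathcal H$, $x\in\mathfrak A_0$ are defined by continuity. It is assumed that (A): if $\xi\in\mathcal H$ and $\xi x=0$ for all $x\in\mathfrak A_0$ then $\xi=0$. With these operations $(\mathcal H,\mathfrak A_0)$ is called a Hilbert quasi *-algebra. $\mathfrak A_0^+=\{\sum_{k=1}^n x_k^*x_k: x_k\in\mathfrak A_0,n\in\mathbb N\}$, $\mathcal H^+$ is its norm closure in $\mathcal H$, and $\mathcal H^+_w=\{\xi\in\mathcal H:\langle\xi x,x\rangle\ge0\ \forall x\in\mathfrak A_0\}$ (w-positive elements). A module function is a map $\mu:\mathcal H\to\mathcal H$ with (i) $\mu(\xi)\in\mathcal H^+_w$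 for all $\xi$; (ii) $\mu(\xi)=\xi$ for all $\xi\in\mathcal H^+_w$; (iii) $\|\mu(\xi)\|=\|\xi\|$ for all $\xi$. *)

From Stdlib Require Import Reals List.
Open Scope R_scope.

Record Cx := mkC { Re : R; Im : R }.
Definition Cadd (a b : Cx) : Cx := mkC (Re a + Re b) (Im a + Im b).
Definition Cmul (a b : Cx) : Cx :=
  mkC (Re a * Re b - Im a * Im b) (Re a * Im b + Im a * Re b).
Definition Cconj (a : Cx) : Cx := mkC (Re a) (- Im a).
Definition C0 : Cx := mkC 0 0.
Definition C1 : Cx := mkC 1 0.
Definition Cnonneg (z : Cx) : Prop := Im z = 0 /\ 0 <= Re z.

(** A Hilbert quasi *-algebra (H, A0): H is a complex Hilbert space (the
    completion of A0, i.e. A0 is a dense subspace carrying the induced inner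
    product), A0 is a *-algebra satisfying (i)-(iv), the products
    xi x, x xi (xi in H, x in A0) are the continuous extensions, the
    involution extends isometrically, and condition (A) holds. *)
Record HQA := {
  H :> Type;
  hadd : H -> H -> H;
  hzero : H;
  hopp : H -> H;
  hscal : Cx -> H -> H;
  hadd_assoc : forall x y z, hadd x (hadd y z) = hadd (hadd x y) z;
  hadd_comm : forall x y, hadd x y = hadd y x;
  hadd_0 : forall x, hadd hzero x = x;
  hadd_opp : forall x, hadd x (hopp x) = hzero;
  hscal_1 : forall x, hscal C1 x = x;
  hscal_assoc : forall a b x, hscal a (hscal b x) = hscal (Cmul a b) x;
  hscal_addl : forall a b x, hscal (Cadd a b) x = hadd (hscal a x) (hscal b x);
  hscal_addr : forall a x y, hscal a (hadd x y) = hadd (hscal a x) (hscal a y);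
  ip : H -> H -> Cx;
  ip_add : forall x y z, ip (hadd x y) z = Cadd (ip x z) (ip y z);
  ip_scal : forall a x z, ip (hscal a x) z = Cmul a (ip x z);
  ip_sym : forall x y, ip y x = Cconj (ip x y);
  ip_pos : forall x, Cnonneg (ip x x);
  ip_def : forall x, ip x x = C0 -> x = hzero;
  h_complete : forall u : nat -> H,
    (forall eps, 0 < eps -> exists N, forall m n, (N <= m)%nat -> (N <= n)%nat ->
        sqrt (Re (ip (hadd (u m) (hopp (u n))) (hadd (u m) (hopp (u n))))) < eps) ->
    exists l, forall eps, 0 < eps -> exists N, forall n, (N <= n)%nat ->
        sqrt (Re (ip (hadd (u n) (hopp l)) (hadd (u n) (hopp l)))) < eps;
  A0 : H -> Prop;
  A0_zero : A0 hzero;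
  A0_add : forall x y, A0 x -> A0 y -> A0 (hadd x y);
  A0_scal : forall a x, A0 x -> A0 (hscal a x);
  A0_dense : forall xi eps, 0 < eps -> exists x, A0 x /\
      sqrt (Re (ip (hadd xi (hopp x)) (hadd xi (hopp x)))) < eps;
  (* multiplication (meaningful when at least one factor is in A0) *)
  mul : H -> H -> H;
  A0_mul : forall x y, A0 x -> A0 y -> A0 (mul x y);
  mul_assoc : forall x y z, A0 x -> A0 y -> A0 z -> mul x (mul y z) = mul (mul x y) z;
  mul_addl : forall xi eta x, A0 x -> mul (hadd xi eta) x = hadd (mul xi x) (mul eta x);
  mul_scall : forall a xi x, A0 x -> mul (hscal a xi) x = hscal a (mul xi x);
  mul_addr : forall x xi eta, A0 x -> mul x (hadd xi eta) = hadd (mul x xi) (mul x eta);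
  mul_scalr : forall a x xi, A0 x -> mul x (hscal a xi) = hscal a (mul x xi);
  mul_addr' : forall xi x y, A0 x -> A0 y -> mul xi (hadd x y) = hadd (mul xi x) (mul xi y);
  mul_scalr' : forall a xi x, A0 x -> mul xi (hscal a x) = hscal a (mul xi x);
  mul_addl' : forall x y xi, A0 x -> A0 y -> mul (hadd x y) xi = hadd (mul x xi) (mul y xi);
  mul_scall' : forall a x xi, A0 x -> mul (hscal a x) xi = hscal a (mul x xi);
  (* (i) and the extension by continuity: for x in A0, xi |-> x xi and
     xi |-> xi x are bounded (hence continuous) on H *)
  mul_bounded_l : forall x, A0 x -> exists c, forall xi,
      sqrt (Re (ip (mul x xi) (mul x xi))) <= c * sqrt (Re (ip xi xi));
  mul_bounded_r : forall x, A0 x -> exists c, forall xi,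
      sqrt (Re (ip (mul xi x) (mul xi x))) <= c * sqrt (Re (ip xi xi));
  inv : H -> H;
  A0_inv : forall x, A0 x -> A0 (inv x);
  inv_inv : forall xi, inv (inv xi) = xi;
  inv_add : forall xi eta, inv (hadd xi eta) = hadd (inv xi) (inv eta);
  inv_scal : forall a xi, inv (hscal a xi) = hscal (Cconj a) (inv xi);
  inv_isom : forall xi, Re (ip (inv xi) (inv xi)) = Re (ip xi xi);
  inv_mul : forall x y, A0 x -> A0 y -> inv (mul x y) = mul (inv y) (inv x);
  ip_mul : forall x y z, A0 x -> A0 y -> A0 z -> ip (mul x y) z = ip y (mul (inv x) z);
  ip_inv : forall x y, A0 x -> A0 y -> ip x y = ip (inv y) (inv x);
  A0_products_dense : forall x eps, A0 x -> 0 < eps ->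
    exists l : list (H * H), (forall p, In p l -> A0 (fst p) /\ A0 (snd p)) /\
      let s := fold_right hadd hzero (map (fun p => mul (fst p) (snd p)) l) in
      sqrt (Re (ip (hadd x (hopp s)) (hadd x (hopp s)))) < eps;
  cond_A : forall xi, (forall x, A0 x -> mul xi x = hzero) -> xi = hzero
}.

Section Notions.
Variable HA : HQA.

Definition hnorm (xi : H HA) : R := sqrt (Re (ip HA xi xi)).
Definition hsub (xi eta : H HA) : H HA := hadd HA xi (hopp HA eta).

Definition A0plus (xi : H HA) : Prop :=
  exists l : list (H HA), (forall x, In x l -> A0 HA x) /\
    xi = fold_right (hadd HA) (hzero HA) (map (fun x => mul HA (inv HA x) x) l).

Definition Hplus (xi : H HA) : Prop :=
  exists u : nat -> H HA, (forall n, A0plus (u n)) /\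
    forall eps, 0 < eps -> exists N, forall n, (N <= n)%nat -> hnorm (hsub (u n) xi) < eps.

Definition Hwplus (xi : H HA) : Prop :=
  forall x, A0 HA x -> Cnonneg (ip HA (mul HA xi x) x).

Definition module_function (mu : H HA -> H HA) : Prop :=
  (forall xi, Hwplus (mu xi)) /\
  (forall xi, Hwplus xi -> mu xi = xi) /\
  (forall xi, hnorm (mu xi) = hnorm xi).

Definition norm_continuous (f : H HA -> H HA) : Prop :=
  forall xi eps, 0 < eps -> exists delta, 0 < delta /\
    forall eta, hnorm (hsub eta xi) < delta -> hnorm (hsub (f eta) (f xi)) < eps.

End Notions.

(* Both inclusions come from the continuity of [mu] together with [mu xi = xi]
   on w-positive elements.  Elements of A0^+ are w-positive, so if they
   converge to xi they are fixed by [mu] and therefore converge to [mu xi] as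
   well; uniqueness of limits gives [xi = mu xi], which is w-positive.
   Conversely, if xi is w-positive and x_n -> xi with x_n in A0, then
   mu(x_n) lies in A0^+ and converges to [mu xi = xi]. *)

From Pilot Require Import Defs.
From Stdlib Require Import Reals List.
From Stdlib Require Import Lra Lia IndefiniteDescription.

Lemma Cx_eq (a b : Cx) : Re a = Re b -> Im a = Im b -> a = b.
Proof. destruct a, b; simpl; intros; subst; reflexivity. Qed.

Lemma Cnonneg_add (a b : Cx) : Cnonneg a -> Cnonneg b -> Cnonneg (Cadd a b).
Proof. unfold Cnonneg, Cadd; simpl; intros [] []; split; lra. Qed.

Definition Cm1 : Cx := mkC (-1) 0.

Lemma Rle0_of_lt_sq (r : R) : (forall e, 0 < e -> r < e * e) -> r <= 0.
Proof.
  intros Hr. destruct (Rle_dec r 0) as [|]; [assumption|].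
  set (e := Rmin 1 (r / 2)).
  assert (e <= 1) by apply Rmin_l. assert (e <= r / 2) by apply Rmin_r.
  assert (0 < e) by (apply Rmin_pos; lra).
  specialize (Hr e ltac:(assumption)). nra.
Qed.

Section HilbertQuasiAlgebra.
Variable HA : HQA.

Definition hlim (u : nat -> H HA) (l : H HA) : Prop :=
  forall eps, 0 < eps -> exists N, forall n, (N <= n)%nat -> hnorm HA (hsub HA (u n) l) < eps.

Lemma hadd_0r (x : H HA) : hadd HA x (hzero HA) = x.
Proof. rewrite hadd_comm, hadd_0; reflexivity. Qed.

Lemma hadd_idem_eq0 (y : H HA) : hadd HA y y = y -> y = hzero HA.
Proof.
  intros Hy.
  transitivity (hadd HA (hadd HA y y) (hopp HA y)).
  - rewrite <- hadd_assoc, hadd_opp, hadd_0r; reflexivity.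
  - rewrite Hy, hadd_opp; reflexivity.
Qed.

Lemma hscal0 (x : H HA) : hscal HA Defs.C0 x = hzero HA.
Proof. apply hadd_idem_eq0; rewrite <- hscal_addl; f_equal; apply Cx_eq; simpl; ring. Qed.

Lemma hopp_unique (x y : H HA) : hadd HA x y = hzero HA -> y = hopp HA x.
Proof.
  intros Hxy.
  transitivity (hadd HA (hadd HA (hopp HA x) x) y).
  - rewrite (hadd_comm HA (hopp HA x) x), hadd_opp, hadd_0; reflexivity.
  - rewrite <- hadd_assoc, Hxy, hadd_0r; reflexivity.
Qed.

Lemma hoppE (x : H HA) : hopp HA x = hscal HA Cm1 x.
Proof.
  symmetry; apply hopp_unique.
  rewrite <- (hscal_1 HA x) at 1; rewrite <- hscal_addl.
  replace (Cadd Defs.C1 Cm1) with Defs.C0 by (apply Cx_eq; simpl; ring).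
  apply hscal0.
Qed.

Lemma hsub_eq0 (a b : H HA) : hsub HA a b = hzero HA -> a = b.
Proof.
  unfold hsub; intros Hab.
  transitivity (hadd HA a (hadd HA (hopp HA b) b)).
  - rewrite (hadd_comm HA (hopp HA b)), hadd_opp, hadd_0r; reflexivity.
  - rewrite hadd_assoc, Hab, hadd_0; reflexivity.
Qed.

Lemma hsub_split (a b c : H HA) :
  hsub HA a c = hadd HA (hsub HA a b) (hsub HA b c).
Proof.
  unfold hsub.
  rewrite <- hadd_assoc, (hadd_assoc HA (hopp HA b)), (hadd_comm HA (hopp HA b) b),
    hadd_opp, hadd_0; reflexivity.
Qed.

Lemma hsubC (a b : H HA) : hsub HA b a = hscal HA Cm1 (hsub HA a b).
Proof.
  unfold hsub; rewrite hscal_addr, (hoppE b), hscal_assoc.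
  replace (Cmul Cm1 Cm1) with Defs.C1 by (apply Cx_eq; simpl; ring).
  rewrite hscal_1, (hoppE a); apply hadd_comm.
Qed.

Lemma nsq_ge0 (z : H HA) : 0 <= Re (ip HA z z).
Proof. apply (ip_pos HA z). Qed.

Lemma nsq_le0_eq0 (z : H HA) : Re (ip HA z z) <= 0 -> z = hzero HA.
Proof.
  intros Hz; apply ip_def.
  destruct (ip_pos HA z) as [Him Hre]; apply Cx_eq; simpl; lra.
Qed.

Lemma nsq_scal_m1 (z : H HA) :
  Re (ip HA (hscal HA Cm1 z) (hscal HA Cm1 z)) = Re (ip HA z z).
Proof. rewrite ip_scal, ip_sym, ip_scal; destruct (ip HA z z); simpl; ring. Qed.

Lemma nsq_add_expand (a b : H HA) :
  Re (ip HA (hadd HA a b) (hadd HA a b)) =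
  Re (ip HA a a) + Re (ip HA b b) + Re (ip HA a b) + Re (ip HA b a).
Proof.
  rewrite ip_add, (ip_sym HA (hadd HA a b) a), (ip_sym HA (hadd HA a b) b), !ip_add.
  destruct (ip HA a a), (ip HA b a), (ip HA a b), (ip HA b b); simpl; ring.
Qed.

(* Parallelogram inequality: add the expansion of [|a - b|^2 >= 0]. *)
Lemma nsq_add_le (a b : H HA) :
  Re (ip HA (hadd HA a b) (hadd HA a b)) <= 2 * (Re (ip HA a a) + Re (ip HA b b)).
Proof.
  pose proof (nsq_ge0 (hadd HA a (hscal HA Cm1 b))) as P.
  rewrite nsq_add_expand, nsq_scal_m1, (ip_sym HA (hscal HA Cm1 b) a), ip_scal in P.
  rewrite nsq_add_expand, (ip_sym HA b a).
  destruct (ip HA b a); simpl in *; lra.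
Qed.

Lemma hnorm_hsubC (a b : H HA) : hnorm HA (hsub HA a b) = hnorm HA (hsub HA b a).
Proof. unfold hnorm; rewrite (hsubC a b), nsq_scal_m1; reflexivity. Qed.

Lemma nsq_lt_of_hnorm_lt (z : H HA) (e : R) :
  hnorm HA z < e -> Re (ip HA z z) < e * e.
Proof.
  unfold hnorm; intros Hl.
  pose proof (sqrt_sqrt _ (nsq_ge0 z)); pose proof (sqrt_pos (Re (ip HA z z))).
  nra.
Qed.

Lemma hlim_unique (u : nat -> H HA) (a b : H HA) : hlim u a -> hlim u b -> a = b.
Proof.
  intros Ha Hb; apply hsub_eq0, nsq_le0_eq0, Rle0_of_lt_sq; intros e He.
  destruct (Ha (e / 2)) as [Na HNa]; [lra|].
  destruct (Hb (e / 2)) as [Nb HNb]; [lra|].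
  set (n := Nat.max Na Nb).
  specialize (HNa n ltac:(lia)); specialize (HNb n ltac:(lia)).
  rewrite hnorm_hsubC in HNa.
  apply nsq_lt_of_hnorm_lt in HNa; apply nsq_lt_of_hnorm_lt in HNb.
  rewrite (hsub_split a (u n) b).
  eapply Rle_lt_trans; [apply nsq_add_le | nra].
Qed.

Lemma hlim_continuous (f : H HA -> H HA) (u : nat -> H HA) (l : H HA) :
  norm_continuous HA f -> hlim u l -> hlim (fun n => f (u n)) (f l).
Proof.
  intros Hf Hu eps Heps.
  destruct (Hf l eps Heps) as [delta [Hdelta Hfl]].
  destruct (Hu delta Hdelta) as [N HN].
  exists N; intros n Hn; exact (Hfl _ (HN n Hn)).
Qed.

Lemma A0_approx_seq (xi : H HA) :
  exists u : nat -> H HA, (forall n, A0 HA (u n)) /\ hlim u xi.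
Proof.
  assert (Happrox : forall n : nat, exists x,
             A0 HA x /\ hnorm HA (hsub HA xi x) < / INR (S n)).
  { intro n; apply A0_dense, Rinv_0_lt_compat, lt_0_INR; lia. }
  destruct (functional_choice _ Happrox) as [u Hu].
  exists u; split; [intro n; apply Hu|].
  intros eps Heps.
  destruct (archimed_cor1 eps Heps) as [N [HN HN0]].
  exists N; intros n Hn.
  rewrite hnorm_hsubC.
  eapply Rlt_trans; [apply Hu|].
  eapply Rle_lt_trans; [|exact HN].
  apply Rinv_le_contravar; [apply lt_0_INR; lia | apply le_INR; lia].
Qed.

Lemma mul_hzero_l (x : H HA) : A0 HA x -> mul HA (hzero HA) x = hzero HA.
Proof.
  intros Hx; apply hadd_idem_eq0; rewrite <- mul_addl by exact Hx.
  rewrite hadd_0; reflexivity.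
Qed.

Lemma ip_hzero_l (z : H HA) : ip HA (hzero HA) z = Defs.C0.
Proof.
  assert (E : ip HA (hzero HA) z = Cadd (ip HA (hzero HA) z) (ip HA (hzero HA) z))
    by (rewrite <- ip_add, hadd_0; reflexivity).
  destruct (ip HA (hzero HA) z) as [r i]; injection E; intros.
  apply Cx_eq; simpl; lra.
Qed.

(* [<(y* y) x, x> = <y x, y x>] by property (ii) of a Hilbert algebra. *)
Lemma A0plus_Hwplus (xi : H HA) : A0plus HA xi -> Hwplus HA xi.
Proof.
  intros [l [Hl ->]] x Hx.
  induction l as [|y l IH]; simpl.
  - rewrite mul_hzero_l, ip_hzero_l by exact Hx; split; simpl; lra.
  - assert (Hy : A0 HA y) by (apply Hl; left; reflexivity).
    rewrite mul_addl, ip_add by exact Hx.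
    apply Cnonneg_add.
    + rewrite <- mul_assoc, ip_mul, inv_inv by auto using A0_inv, A0_mul.
      apply ip_pos.
    + apply IH; intros z Hz; apply Hl; right; exact Hz.
Qed.

End HilbertQuasiAlgebra.

Theorem mainTheorem17 (HA : HQA) (mu : H HA -> H HA)
  (Hmu : module_function HA mu) (Hcont : norm_continuous HA mu)
  (HmuA0 : forall x, A0 HA x -> A0plus HA (mu x)) :
  forall xi : H HA, Hplus HA xi <-> Hwplus HA xi.
Proof.
  destruct Hmu as [Hmu_pos [Hmu_fix _]].
  intros xi; split.
  - intros [u [Hu Hlim]].
    assert (Hmu_u : hlim HA (fun n => mu (u n)) xi).
    { intros eps Heps; destruct (Hlim eps Heps) as [N HN]; exists N; intros n Hn.
      rewrite Hmu_fix by apply A0plus_Hwplus, Hu; apply HN, Hn. }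
    rewrite (hlim_unique HA _ _ _ Hmu_u (hlim_continuous HA _ _ _ Hcont Hlim)).
    apply Hmu_pos.
  - intros Hw.
    destruct (A0_approx_seq HA xi) as [x [Hx Hlim]].
    exists (fun n => mu (x n)); split; [intro n; apply HmuA0, Hx|].
    change (hlim HA (fun n => mu (x n)) xi); rewrite <- (Hmu_fix xi Hw).
    exact (hlim_continuous HA _ _ _ Hcont Hlim).
Qed.
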